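(* Let $T$ be a ranked monad on $\mathbf{Set}$. For each set $A$ and $t\in TA$ there is a locale map $[\![t]\!]\colon\mathrm{LB}_0T\to A\cdot\mathrm{LB}_0T$ determined by $[\![t]\!]^{-1}\langle a_0\mapsto[t_0]\rangle=[t\mapsto a_0]\wedge[t\gg t_0]$ for $a_0\in A$ and $t_0\in T2$; these make $\mathrm{LB}_0T$ a comodel of $T$ in $\mathbf{Loc}$, and this comodel is the terminal object of the category $\mathrm{Comod}_T(\mathbf{Loc})$ of $T$-comodels in $\mathbf{Loc}$.
   Context: A monad $T$ on $\mathbf{Set}$: sets $TA$, $\mathrm{return}\,a\in TA$, $\mathbin{\gg\!=}\colon TA\times(TB)^A\to TB$ with the monad laws; $t\gg s:=t\mathbin{\gg\!=}\lambda a.s$. Ranked: for some regular $\kappa$ every $t\in TA$ is $t'\mathbin{\gg\!=}\lambda i.\mathrm{return}\,f(i)$ with $t'\in TI$, $|I|<\kappa$. $2=\{0,1\}$. Locales: $\mathbf{Loc}$ is the opposite of the category of frames; $\mathcal{O}(L)$ the frame of $L$, $f^{-1}$ the frame map of a locale map $f$. The copower $A\cdot L$ (the $A$-fold coproduct in $\mathbf{Loc}$) has frame $\mathcal{O}(L)^A$, $\langle a\mapsto u\rangle$ denoting the element equal to $u$ at $a$ and $\bot$ elsewhere; $\upsilon_a\colon L\to A\cdot L$ are the injections. Comodels: a $T$-comodel in a category with copowers is an object $W$ with maps $[\![t]\!]\colon W\to A\cdot W$ for each $t\in TA$, such that $[\![\mathrm{return}\,a]\!]=\upsilon_a$ and $[\![t\mathbin{\gg\!=}u]\!]=[\![u]\!]\circ[\![t]\!]$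 where for $u\colon A\to TB$, $[\![u]\!]:=[[\![u(a)]\!]]_{a\in A}\colon A\cdot W\to B\cdot W$. A comodel map $h\colon W\to W'$ satisfies $[\![t]\!]\circ h=(A\cdot h)\circ[\![t]\!]$ for all $t\in TA$. The behaviour locale $\mathrm{LB}_0T$: frame presented by generators $[b]$ ($b\in T2$) subject to, for all sets $A,B$, $t\in TA$, $u\colon A\to TB$, $a\ne a'\in A$, $b\in B$: $[t\mapsto a]\wedge[t\mapsto a']=\bot$, $[t\gg\mathrm{return}\,a\mapsto a]=\top$, $[t\mathbin{\gg\!=}u\mapsto b]=\bigvee_a[t\mapsto a]\wedge[t\gg u(a)\mapsto b]$, where $[t\mapsto a]:=[t\mathbin{\gg\!=}\lambda a'.\mathrm{return}(\delta_a(a'))]$ and $\delta_a(a')=1$ iff $a'=a$, $0$ otherwise. *)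

From Stdlib Require Import ClassicalEpsilon FunctionalExtensionality.

Set Implicit Arguments.

Record Monad := {
  MT :> Type -> Type;
  ret : forall A : Type, A -> MT A;
  bind : forall A B : Type, MT A -> (A -> MT B) -> MT B;
  bind_ret_l : forall A B (a : A) (f : A -> MT B), bind (ret a) f = f a;
  bind_ret_r : forall A (t : MT A), bind t (@ret A) = t;
  bind_assoc : forall A B C (t : MT A) (f : A -> MT B) (g : B -> MT C),
      bind (bind t f) g = bind t (fun a => bind (f a) g)
}.
Arguments ret {m A} _.
Arguments bind {m A B} _ _.

Definition seq_ (T : Monad) A B (t : T A) (s : T B) : T B := bind t (fun _ => s).
Arguments seq_ {T A B} t s.

Definition card_le (X Y : Type) : Prop :=
  exists f : X -> Y, forall x x', f x = f x' -> x = x'.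
Definition card_lt (X Y : Type) : Prop := card_le X Y /\ ~ card_le Y X.
Definition infinite_type (K : Type) : Prop := card_le nat K.
Definition regular (K : Type) : Prop :=
  infinite_type K /\
  forall (J : Type) (X : J -> Type),
    card_lt J K -> (forall j, card_lt (X j) K) -> card_lt {j : J & X j} K.

Definition ranked (T : Monad) : Prop :=
  exists K : Type, regular K /\
    forall (A : Type) (t : T A), exists (I : Type) (t' : T I) (f : I -> A),
      card_lt I K /\ t = bind t' (fun i => ret (f i)).

Record Frame := {
  fcar :> Type;
  fle : fcar -> fcar -> Prop;
  fle_refl : forall x, fle x x;
  fle_trans : forall x y z, fle x y -> fle y z -> fle x z;
  fle_antisym : forall x y, fle x y -> fle y x -> x = y;
  ftop : fcar;
  fmeet : fcar -> fcar -> fcar;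
  fjoin : (fcar -> Prop) -> fcar;
  ftop_max : forall x, fle x ftop;
  fmeet_lb1 : forall x y, fle (fmeet x y) x;
  fmeet_lb2 : forall x y, fle (fmeet x y) y;
  fmeet_glb : forall x y z, fle z x -> fle z y -> fle z (fmeet x y);
  fjoin_ub : forall (S : fcar -> Prop) x, S x -> fle x (fjoin S);
  fjoin_lub : forall (S : fcar -> Prop) y, (forall x, S x -> fle x y) -> fle (fjoin S) y;
  fdistr : forall a (S : fcar -> Prop),
      fmeet a (fjoin S) = fjoin (fun y => exists x, S x /\ y = fmeet a x)
}.
Arguments fle {f} _ _.
Arguments ftop {f}.
Arguments fmeet {f} _ _.
Arguments fjoin {f} _.

Definition fbot (F : Frame) : F := fjoin (fun _ => False).

Lemma fjoin_ext (F : Frame) (S S' : F -> Prop) :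
  (forall x, S x <-> S' x) -> fjoin S = fjoin S'.
Proof.
  intros H; apply fle_antisym; apply fjoin_lub; intros x Hx;
  apply fjoin_ub; apply H; exact Hx.
Qed.

Record FrameHom (F G : Frame) := {
  fh :> F -> G;
  fh_top : fh ftop = ftop;
  fh_meet : forall x y, fh (fmeet x y) = fmeet (fh x) (fh y);
  fh_join : forall S : F -> Prop,
      fh (fjoin S) = fjoin (fun y => exists x, S x /\ y = fh x)
}.

Definition fh_eq F G (f g : FrameHom F G) : Prop := forall x, f x = g x.

Program Definition fh_comp F G H (g : FrameHom G H) (f : FrameHom F G) : FrameHom F H :=
  {| fh := fun x => g (f x) |}.
Next Obligation. rewrite !fh_top; reflexivity. Qed.
Next Obligation. rewrite !fh_meet; reflexivity. Qed.
Next Obligation.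
  rewrite fh_join, fh_join. apply fjoin_ext; intros y; split.
  - intros [z [[x [Hx ->]] ->]]; eauto.
  - intros [x [Hx ->]]; eauto.
Qed.

(* A locale is given by its frame O(L); a locale map L -> M is a frame
   homomorphism O(M) -> O(L) (its inverse-image map f^{-1}). *)
Definition LocMap (L M : Frame) := FrameHom M L.
Definition loc_inv L M (f : LocMap L M) : M -> L := fun x => f x.
Arguments loc_inv {L M} f _.
Definition loc_eq L M (f g : LocMap L M) : Prop := fh_eq f g.
Definition loc_comp L M N (g : LocMap M N) (f : LocMap L M) : LocMap L N :=
  fh_comp f g.

Program Definition copow (A : Type) (L : Frame) : Frame :=
  {| fcar := A -> L;
     fle := fun f g => forall a, fle (f a) (g a);
     ftop := fun _ => ftop;
     fmeet := fun f g a => fmeet (f a) (g a);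
     fjoin := fun S a => fjoin (fun y => exists f, S f /\ y = f a) |}.
Next Obligation. apply fle_refl. Qed.
Next Obligation. eapply fle_trans; eauto. Qed.
Next Obligation. apply functional_extensionality; intro a; apply fle_antisym; auto. Qed.
Next Obligation. apply ftop_max. Qed.
Next Obligation. apply fmeet_lb1. Qed.
Next Obligation. apply fmeet_lb2. Qed.
Next Obligation. apply fmeet_glb; auto. Qed.
Next Obligation. apply fjoin_ub; eauto. Qed.
Next Obligation. apply fjoin_lub; intros x [f [Hf ->]]; auto. Qed.
Next Obligation.
  apply functional_extensionality; intro i; rewrite fdistr.
  apply fjoin_ext; intros y; split.
  - intros [x [[f [Hf ->]] ->]]. exists (fun i => fmeet (a i) (f i)); eauto.
  - intros [g [[f [Hf ->]] ->]]. eauto.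
Qed.

(* <a |-> u> : equal to u at a and bottom elsewhere *)
Definition pt (A : Type) (L : Frame) (a : A) (u : L) : copow A L :=
  fun a' => fjoin (fun x => a' = a /\ x = u).
Arguments pt {A L} a u.

Program Definition upsilon (A : Type) (L : Frame) (a : A) : LocMap L (copow A L) :=
  {| fh := fun (f : copow A L) => f a |}.

Program Definition copair (A B : Type) (W : Frame) (f : A -> LocMap W (copow B W))
  : LocMap (copow A W) (copow B W) :=
  {| fh := fun (g : copow B W) => (fun a => f a g) : copow A W |}.
Next Obligation. apply functional_extensionality; intro a; apply (fh_top (f a)). Qed.
Next Obligation. apply functional_extensionality; intro a; apply (fh_meet (f a)). Qed.
Next Obligation.
  apply functional_extensionality; intro a;
  refine (eq_trans (fh_join (f a) S) _).
  apply fjoin_ext; intros y; split.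
  - intros [x [Hx ->]]. exists (fun a => f a x); eauto.
  - intros [g [[x [Hx ->]] ->]]; eauto.
Qed.

Program Definition copow_map (A : Type) (W W' : Frame) (h : LocMap W W')
  : LocMap (copow A W) (copow A W') :=
  {| fh := fun (g : copow A W') => (fun a => h (g a)) : copow A W |}.
Next Obligation. apply functional_extensionality; intro a; apply fh_top. Qed.
Next Obligation. apply functional_extensionality; intro a; apply fh_meet. Qed.
Next Obligation.
  apply functional_extensionality; intro a;
  refine (eq_trans (fh_join h _) _).
  apply fjoin_ext; intros y; split.
  - intros [x [[g [Hg ->]] ->]]. exists (fun a => h (g a)); eauto.
  - intros [g [[x [Hx ->]] ->]]; eauto.
Qed.

Definition ComodelStr (T : Monad) (W : Frame) :=
  forall (A : Type) (t : T A), LocMap W (copow A W).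

Definition is_comodel (T : Monad) (W : Frame) (sem : ComodelStr T W) : Prop :=
  (forall (A : Type) (a : A), loc_eq (sem A (ret a)) (upsilon W a)) /\
  (forall (A B : Type) (t : T A) (u : A -> T B),
      loc_eq (sem B (bind t u))
             (loc_comp (copair (fun a => sem B (u a))) (sem A t))).

Definition is_comodel_map (T : Monad) (W W' : Frame)
  (semW : ComodelStr T W) (semW' : ComodelStr T W') (h : LocMap W W') : Prop :=
  forall (A : Type) (t : T A),
    loc_eq (loc_comp (semW' A t) h) (loc_comp (copow_map A h) (semW A t)).

Definition terminal_comodel (T : Monad) (L : Frame) (sem : ComodelStr T L) : Prop :=
  forall (W : Frame) (semW : ComodelStr T W), is_comodel semW ->
    (exists h : LocMap W L, is_comodel_map semW sem h) /\
    (forall h h' : LocMap W L, is_comodel_map semW sem h ->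
        is_comodel_map semW sem h' -> loc_eq h h').

Definition delta (A : Type) (a a' : A) : bool :=
  if excluded_middle_informative (a' = a) then true else false.

Definition maps_to (T : Monad) (F : Frame) (g : T bool -> F) A (t : T A) (a : A) : F :=
  g (bind t (fun a' => ret (delta a a'))).
Arguments maps_to {T F} g {A} t a.

Definition LB0_relations (T : Monad) (F : Frame) (g : T bool -> F) : Prop :=
  (forall (A : Type) (t : T A) (a a' : A), a <> a' ->
      fmeet (maps_to g t a) (maps_to g t a') = fbot F) /\
  (forall (A : Type) (t : T A) (a : A),
      maps_to g (seq_ t (ret a)) a = ftop) /\
  (forall (A B : Type) (t : T A) (u : A -> T B) (b : B),
      maps_to g (bind t u) b =
      fjoin (fun y => exists a : A, y = fmeet (maps_to g t a) (maps_to g (seq_ t (u a)) b))).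

Arguments LB0_relations {T F} g.

(* (L, gen) is the frame presented by generators [b] (b in T 2) and the
   relations above, i.e. it has the universal property of the presentation. *)
Definition presents_LB0 (T : Monad) (L : Frame) (gen : T bool -> L) : Prop :=
  LB0_relations gen /\
  forall (F : Frame) (g : T bool -> F), LB0_relations g ->
    (exists h : FrameHom L F, forall b, h (gen b) = g b) /\
    (forall h h' : FrameHom L F, (forall b, h (gen b) = g b) ->
        (forall b, h' (gen b) = g b) -> fh_eq h h').

Arguments presents_LB0 {T L} gen.

(* LB_0 T exists as the frame of ideals of the coverage on finite meets of generators
   whose covers are the defining relations.  For any presentation, [t >> -] induces a
   frame endomorphism of LB_0 T, and [[t]]^{-1} f := \/_a [t |-> a] /\ (t >> -)(f a) is a
   frame map because the [t |-> a] are pairwise disjoint and cover.  Frame maps out of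
   A . LB_0 T are determined by their values on the <a |-> [t0]>, which yields the
   uniqueness of [[t]] and the comodel laws.  For a comodel W, the elements
   [[b]]_W^{-1} <true |-> top> satisfy the defining relations, so they induce a frame map,
   which is a comodel map W -> LB_0 T; conversely every comodel map sends [b] to them. *)
From Stdlib Require Import ClassicalEpsilon FunctionalExtensionality PropExtensionality
  ProofIrrelevance List.
Import ListNotations.
Set Implicit Arguments.

Section FrameFacts.
Context {F : Frame}.
Implicit Types x y z c : F.

Lemma fle_fmeet_l x y z : fle x z -> fle (fmeet x y) z.
Proof. intros; eapply fle_trans; [apply fmeet_lb1 | auto]. Qed.

Lemma fle_fmeet_r x y z : fle y z -> fle (fmeet x y) z.
Proof. intros; eapply fle_trans; [apply fmeet_lb2 | auto]. Qed.

Lemma fmeet_mono x y x' y' : fle x x' -> fle y y' -> fle (fmeet x y) (fmeet x' y').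
Proof. intros; apply fmeet_glb; [apply fle_fmeet_l | apply fle_fmeet_r]; auto. Qed.

Lemma fmeet_comm x y : fmeet x y = fmeet y x.
Proof. apply fle_antisym; apply fmeet_glb; (apply fmeet_lb1 || apply fmeet_lb2). Qed.

Lemma fmeet_assoc x y z : fmeet x (fmeet y z) = fmeet (fmeet x y) z.
Proof.
  apply fle_antisym; repeat apply fmeet_glb;
    auto using fle_refl, fle_fmeet_l, fle_fmeet_r.
Qed.

Lemma fmeet_of_fle x y : fle x y -> fmeet x y = x.
Proof. intros; apply fle_antisym; [apply fmeet_lb1 | apply fmeet_glb; auto using fle_refl]. Qed.

Lemma fmeet_top_r x : fmeet x ftop = x.
Proof. apply fmeet_of_fle, ftop_max. Qed.

Lemma fmeet_top_l x : fmeet ftop x = x.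
Proof. rewrite fmeet_comm; apply fmeet_top_r. Qed.

Lemma fbot_le x : fle (fbot F) x.
Proof. apply fjoin_lub; intros ? []. Qed.

Lemma fle_fbot x : fle x (fbot F) -> x = fbot F.
Proof. intros; apply fle_antisym; auto using fbot_le. Qed.

Lemma fmeet_bot_r x : fmeet x (fbot F) = fbot F.
Proof. apply fle_fbot, fmeet_lb2. Qed.

Lemma fmeet_bot_l x : fmeet (fbot F) x = fbot F.
Proof. apply fle_fbot, fmeet_lb1. Qed.

Lemma fle_fjoin (S : F -> Prop) x y : S y -> fle x y -> fle x (fjoin S).
Proof. intros; eapply fle_trans; [| apply fjoin_ub]; eauto. Qed.

Lemma fmeet_fjoin_le x (S : F -> Prop) c :
  (forall s, S s -> fle (fmeet x s) c) -> fle (fmeet x (fjoin S)) c.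
Proof. intros H; rewrite fdistr; apply fjoin_lub; intros y [s [Hs ->]]; auto. Qed.

Lemma fjoin_fmeet_le x (S : F -> Prop) c :
  (forall s, S s -> fle (fmeet s x) c) -> fle (fmeet (fjoin S) x) c.
Proof.
  intros H; rewrite fmeet_comm; apply fmeet_fjoin_le; intros; rewrite fmeet_comm; auto.
Qed.

Lemma fmeet_fjoin_disjoint A (X Y Z : A -> F) :
  (forall a b, a <> b -> fmeet (X a) (X b) = fbot F) ->
  fmeet (fjoin (fun y => exists a, y = fmeet (X a) (Y a)))
        (fjoin (fun y => exists a, y = fmeet (X a) (Z a)))
  = fjoin (fun y => exists a, y = fmeet (X a) (fmeet (Y a) (Z a))).
Proof.
  intros Hdisj; apply fle_antisym.
  - apply fmeet_fjoin_le; intros s2 [b ->]; apply fjoin_fmeet_le; intros s1 [a ->].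
    destruct (classic (a = b)) as [<- | Hne].
    + apply fle_fjoin with (fmeet (X a) (fmeet (Y a) (Z a))); [eauto |].
      repeat apply fmeet_glb; auto using fle_fmeet_l, fle_fmeet_r, fmeet_lb1, fmeet_lb2.
    + eapply fle_trans; [| apply fbot_le]; rewrite <- (Hdisj a b Hne).
      apply fmeet_mono; apply fmeet_lb1.
  - apply fjoin_lub; intros y [a ->]; apply fmeet_glb.
    + apply fle_fjoin with (fmeet (X a) (Y a)); [eauto |].
      apply fmeet_mono; [apply fle_refl | apply fmeet_lb1].
    + apply fle_fjoin with (fmeet (X a) (Z a)); [eauto |].
      apply fmeet_mono; [apply fle_refl | apply fmeet_lb2].
Qed.

Definition fmeets G (g : G -> F) (l : list G) : F :=
  fold_right (fun b acc => fmeet (g b) acc) ftop l.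

Lemma fmeets_app G (g : G -> F) l l' : fmeets g (l ++ l') = fmeet (fmeets g l) (fmeets g l').
Proof.
  induction l as [| b l IH]; simpl; [now rewrite fmeet_top_l |].
  now rewrite IH, fmeet_assoc.
Qed.

Lemma fmeets_In G (g : G -> F) l b : In b l -> fle (fmeets g l) (g b).
Proof.
  induction l as [| b' l IH]; simpl; [contradiction |].
  intros [<- | Hb]; [apply fmeet_lb1 | apply fle_fmeet_r; auto].
Qed.

Lemma fmeets_incl G (g : G -> F) l l' : incl l' l -> fle (fmeets g l) (fmeets g l').
Proof.
  induction l' as [| b l' IH]; simpl; intros H; [apply ftop_max |].
  apply fmeet_glb; [apply fmeets_In, H; now left | apply IH; intros x Hx; apply H; now right].
Qed.

End FrameFacts.

Lemma fh_mono F G (h : FrameHom F G) x y : fle x y -> fle (h x) (h y).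
Proof.
  intros H; rewrite <- (fmeet_of_fle _ _ H), fh_meet; apply fmeet_lb2.
Qed.

Lemma fh_bot F G (h : FrameHom F G) : h (fbot F) = fbot G.
Proof. unfold fbot; rewrite fh_join; apply fjoin_ext; firstorder. Qed.

Lemma fh_fmeets F G (h : FrameHom F G) X (g : X -> F) l :
  h (fmeets g l) = fmeets (fun b => h (g b)) l.
Proof.
  induction l as [| b l IH]; simpl; [apply fh_top |]; now rewrite fh_meet, IH.
Qed.

Section PrincipalDown.
Variables (W : Frame) (c : W).

Definition down_car := {x : W | fle x c}.

Lemma down_ext (x y : down_car) : proj1_sig x = proj1_sig y -> x = y.
Proof. destruct x, y; simpl; intros ->; f_equal; apply proof_irrelevance. Qed.

Lemma down_join_le (S : down_car -> Prop) :
  fle (fjoin (fun w => exists x, S x /\ w = proj1_sig x)) c.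
Proof. apply fjoin_lub; intros w [x [_ ->]]; apply (proj2_sig x). Qed.

Definition fdown : Frame.
Proof.
  refine {| fcar := down_car;
            fle x y := fle (proj1_sig x) (proj1_sig y);
            ftop := exist (fun x => fle x c) c (fle_refl _ c);
            fmeet x y := exist (fun w => fle w c) (fmeet (proj1_sig x) (proj1_sig y))
                                 (fle_fmeet_l _ _ _ (proj2_sig x));
            fjoin S := exist (fun w => fle w c) _ (down_join_le S) |}; simpl.
  - intros; apply fle_refl.
  - intros; eapply fle_trans; eauto.
  - intros; apply down_ext, fle_antisym; auto.
  - intros x; apply (proj2_sig x).
  - intros; apply fmeet_lb1.
  - intros; apply fmeet_lb2.
  - intros; apply fmeet_glb; auto.
  - intros S x H; apply fjoin_ub; eauto.
  - intros S y H; apply fjoin_lub; intros w [x [Hx ->]]; auto.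
  - intros a S; apply down_ext; simpl; rewrite fdistr; apply fjoin_ext; intros y; split.
    + intros [w [[x [Hx ->]] ->]]; eexists; split; [eauto | reflexivity].
    + intros [y' [[x [Hx ->]] ->]]; simpl; eauto.
Defined.

Variables (F : Frame) (phi : F -> W) (phi_top : phi ftop = c)
  (phi_meet : forall x y, phi (fmeet x y) = fmeet (phi x) (phi y))
  (phi_join : forall S, phi (fjoin S) = fjoin (fun y => exists x, S x /\ y = phi x)).

Lemma fdown_hom_bound x : fle (phi x) c.
Proof. rewrite <- phi_top, <- (fmeet_top_r x), phi_meet; apply fmeet_lb2. Qed.

Definition fdown_hom : FrameHom F fdown.
Proof.
  refine {| fh x := (exist _ (phi x) (fdown_hom_bound x) : fdown) |}.
  - apply down_ext; simpl; auto.
  - intros; apply down_ext; simpl; auto.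
  - intros S; apply down_ext; simpl; rewrite phi_join; apply fjoin_ext; intros y; split.
    + intros [x [Hx ->]]; eexists; split; [eexists; split; [eauto | reflexivity] | reflexivity].
    + intros [y' [[x [Hx ->]] ->]]; simpl; eauto.
Defined.

End PrincipalDown.

Section Copower.
Context {A : Type} {L : Frame}.

Lemma copow_ext (f g : copow A L) : (forall a, f a = g a) -> f = g.
Proof. intros; apply functional_extensionality; auto. Qed.

Lemma copow_bot : fbot (copow A L) = fun _ => fbot L.
Proof. apply copow_ext; intros a; simpl; unfold fbot; apply fjoin_ext; firstorder. Qed.

Lemma pt_eq (a : A) (u : L) : pt a u a = u.
Proof.
  apply fle_antisym; [apply fjoin_lub; intros x [_ ->]; apply fle_refl | apply fjoin_ub; auto].
Qed.

Lemma pt_neq (a a' : A) (u : L) : a' <> a -> pt a u a' = fbot L.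
Proof. intros H; apply fjoin_ext; intros x; split; [intros [e _]; contradiction | intros []]. Qed.

Lemma pt_meet (a : A) (x y : L) : pt a (fmeet x y) = @fmeet (copow A L) (pt a x) (pt a y).
Proof.
  apply copow_ext; intros a'; simpl; destruct (classic (a' = a)) as [-> | Hne].
  - now rewrite !pt_eq.
  - now rewrite !pt_neq, fmeet_bot_r.
Qed.

Lemma pt_join (a : A) (S : L -> Prop) :
  pt a (fjoin S) = @fjoin (copow A L) (fun y => exists x, S x /\ y = pt a x).
Proof.
  apply copow_ext; intros a'; simpl; destruct (classic (a' = a)) as [-> | Hne].
  - rewrite pt_eq; apply fjoin_ext; intros y; split.
    + intros Hy; exists (pt a y); split; [eauto | now rewrite pt_eq].
    + intros [g [[x [Hx ->]] ->]]; now rewrite pt_eq.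
  - rewrite pt_neq by auto; apply fle_antisym; [apply fbot_le |].
    apply fjoin_lub; intros y [g [[x [Hx ->]] ->]]; rewrite pt_neq by auto; apply fle_refl.
Qed.

Lemma pt_disjoint (a a' : A) (x y : L) :
  a <> a' -> @fmeet (copow A L) (pt a x) (pt a' y) = fbot (copow A L).
Proof.
  intros Hne; rewrite copow_bot; apply copow_ext; intros b; simpl.
  destruct (classic (b = a)) as [-> | Hb].
  - now rewrite (pt_neq y), fmeet_bot_r by auto.
  - now rewrite (pt_neq x), fmeet_bot_l by auto.
Qed.

Lemma pt_top_meet (a : A) (x : L) : @fmeet (copow A L) (pt a ftop) (fun _ => x) = pt a x.
Proof.
  apply copow_ext; intros b; simpl; destruct (classic (b = a)) as [-> | Hb].
  - now rewrite !pt_eq, fmeet_top_l.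
  - now rewrite !pt_neq, fmeet_bot_l.
Qed.

Lemma copow_fjoin_pt (f : copow A L) :
  f = @fjoin (copow A L) (fun y => exists a, y = pt a (f a)).
Proof.
  apply copow_ext; intros a'; simpl; apply fle_antisym.
  - apply fle_fjoin with (pt a' (f a') a'); [eauto | rewrite pt_eq; apply fle_refl].
  - apply fjoin_lub; intros y [g [[a ->] ->]].
    destruct (classic (a' = a)) as [-> | Hne].
    + rewrite pt_eq; apply fle_refl.
    + rewrite pt_neq by auto; apply fbot_le.
Qed.

End Copower.

Lemma fh_pt A F G (h : FrameHom F G) (a a' : A) (u : F) : h (pt a u a') = pt a (h u) a'.
Proof.
  unfold pt; rewrite fh_join; apply fjoin_ext; intros y; split.
  - intros [x [[e ->] ->]]; auto.
  - intros [e ->]; eauto.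
Qed.

Section Coverage.
Variables (G : Type) (cov : list G -> (list G -> Prop) -> Prop).

(* A list [l] stands for the meet of its members, so [incl l' l] means that [l]
   is below [l'].  [cov F0 Q] asks the meet of [F0] to be below the join of the
   meets of the [m] with [Q m]; ideals are closed under all meets of such covers
   with a fixed [l], which makes the frame below distributive. *)
Definition downset (D : list G -> Prop) : Prop := forall l l', incl l' l -> D l' -> D l.

Record is_ideal (D : list G -> Prop) : Prop := {
  ideal_down : downset D;
  ideal_cov : forall F0 Q, cov F0 Q ->
    forall l, (forall m, Q m -> D (l ++ m)) -> D (l ++ F0) }.

Definition closure (U : list G -> Prop) (l : list G) : Prop :=
  forall D, is_ideal D -> (forall m, U m -> D m) -> D l.

Lemma closure_ideal U : is_ideal (closure U).
Proof.
  split.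
  - intros l l' H Hl D HD HU; apply (ideal_down HD) with l'; [| apply Hl]; auto.
  - intros F0 Q HQ l H D HD HU; apply (ideal_cov HD) with Q; auto.
    intros m Hm; apply H; auto.
Qed.

Lemma subset_closure U l : U l -> closure U l.
Proof. intros H D _ HU; auto. Qed.

Lemma closure_min U D : is_ideal D -> (forall m, U m -> D m) -> forall l, closure U l -> D l.
Proof. intros HD HU l H; apply H; auto. Qed.

Lemma closure_sub U V : (forall m, U m -> closure V m) -> forall l, closure U l -> closure V l.
Proof. apply closure_min, closure_ideal. Qed.

Lemma closure_down U l l' : incl l' l -> closure U l' -> closure U l.
Proof. apply (ideal_down (closure_ideal U)). Qed.

Lemma closure_cov U F0 Q l :
  cov F0 Q -> (forall m, Q m -> closure U (l ++ m)) -> closure U (l ++ F0).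
Proof. intros; eapply (ideal_cov (closure_ideal U)); eauto. Qed.

Lemma closure_meet_downset U D l :
  downset U -> downset D -> closure U l -> D l -> closure (fun m => U m /\ D m) l.
Proof.
  intros HU HD HUl HDl.
  (* Ideals are closed under covers meeted with any prefix, so the property
     may be carried through the closure with an arbitrary prefix in [D]. *)
  set (E := fun l => forall m, D m -> closure (fun m => U m /\ D m) (m ++ l)).
  assert (HE : is_ideal E).
  { split.
    - intros l1 l2 H12 H2 m Hm; apply closure_down with (m ++ l2); auto.
      apply incl_app_app; [apply incl_refl | exact H12].
    - intros F0 Q HQ l1 H m Hm; rewrite app_assoc; apply closure_cov with Q; auto.
      intros m' Hm'; rewrite <- app_assoc; apply H; auto. }
  assert (HUE : forall m, U m -> E m).
  { intros m Hm m' Hm'; apply subset_closure; split.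
    - apply HU with m; auto using incl_appr, incl_refl.
    - apply HD with m'; auto using incl_appl, incl_refl. }
  apply closure_down with (l ++ l); [apply incl_app; apply incl_refl |].
  exact (closure_min HE HUE HUl l HDl).
Qed.

Lemma closure_meet U V l :
  downset U -> downset V -> closure U l -> closure V l -> closure (fun m => U m /\ V m) l.
Proof.
  intros HU HV HUl HVl.
  assert (H := closure_meet_downset HU (ideal_down (closure_ideal V)) HUl HVl).
  revert H; apply closure_sub; intros m [Hm HVm].
  assert (H := closure_meet_downset HV HU HVm Hm).
  revert H; apply closure_sub; intros k [? ?]; apply subset_closure; split; auto.
Qed.

Definition ideal := {D : list G -> Prop | is_ideal D}.

Lemma ideal_ext (x y : ideal) : (forall l, proj1_sig x l <-> proj1_sig y l) -> x = y.
Proof.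
  destruct x as [x Hx], y as [y Hy]; simpl; intros H.
  assert (x = y) as <-.
  { apply functional_extensionality; intro l; apply propositional_extensionality; auto. }
  f_equal; apply proof_irrelevance.
Qed.

Lemma is_ideal_top : is_ideal (fun _ => True).
Proof. split; [intros l l' _ _ | intros F0 Q _ l _]; exact I. Qed.

Lemma is_ideal_meet D E : is_ideal D -> is_ideal E -> is_ideal (fun l => D l /\ E l).
Proof.
  intros HD HE; split.
  - intros l l' H [H1 H2]; split; [apply (ideal_down HD) with l' | apply (ideal_down HE) with l'];
      auto.
  - intros F0 Q HQ l H; split; [apply (ideal_cov HD) with Q | apply (ideal_cov HE) with Q];
      auto; intros m Hm; apply H; auto.
Qed.

Definition ideal_union (S : ideal -> Prop) (l : list G) : Prop :=
  exists x, S x /\ proj1_sig x l.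

Lemma ideal_union_downset S : downset (ideal_union S).
Proof.
  intros l l' H [x [Hx Hl']]; exists x; split; auto; apply (ideal_down (proj2_sig x)) with l'; auto.
Qed.

Definition ideal_meet (x y : ideal) : ideal :=
  exist _ _ (is_ideal_meet (proj2_sig x) (proj2_sig y)).

Definition ideal_frame : Frame.
Proof.
  refine {| fcar := ideal;
            fle x y := forall l, proj1_sig x l -> proj1_sig y l;
            ftop := exist _ _ is_ideal_top;
            fmeet := ideal_meet;
            fjoin S := exist _ _ (closure_ideal (ideal_union S)) |}; simpl.
  - auto.
  - auto.
  - intros x y H1 H2; apply ideal_ext; split; auto.
  - auto.
  - intros x y l [H _]; auto.
  - intros x y l [_ H]; auto.
  - intros x y z H1 H2 l H; split; auto.
  - intros S x Hx l H; apply subset_closure; exists x; auto.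
  - intros S y H; apply closure_min; [apply (proj2_sig y) |].
    intros m [x [Hx Hm]]; apply (H x Hx); auto.
  - intros a S; apply ideal_ext; intros l; simpl; split.
    + intros [Ha HJ].
      assert (H := closure_meet_downset (@ideal_union_downset S) (ideal_down (proj2_sig a)) HJ Ha).
      revert H; apply closure_sub; intros m [[x [Hx Hxm]] Ham]; apply subset_closure.
      exists (ideal_meet a x); split; [eauto | simpl; auto].
    + intros HJ; split.
      * revert l HJ; apply closure_min; [apply (proj2_sig a) |].
        intros m [y [[x [Hx ->]] Hy]]; apply Hy.
      * revert l HJ; apply closure_sub.
        intros m [y [[x [Hx ->]] Hy]]; apply subset_closure; exists x; split; [| apply Hy]; auto.
Defined.

Definition ideal_gen (b : G) : ideal_frame :=
  exist _ (closure (fun l => In b l)) (closure_ideal _).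

Lemma In_downset b : downset (fun l => In b l).
Proof. intros l l' H H'; auto. Qed.

Lemma incl_downset l : downset (fun k => incl l k).
Proof. intros k k' H H'; eapply incl_tran; eauto. Qed.

Lemma fmeets_ideal_gen l k : proj1_sig (fmeets ideal_gen l) k <-> closure (fun k => incl l k) k.
Proof.
  revert k; induction l as [| b l IH]; simpl; intros k; split.
  - intros _; apply subset_closure, incl_nil_l.
  - auto.
  - intros [H1 H2]; apply IH in H2.
    assert (H := closure_meet (@In_downset b) (@incl_downset l) H1 H2).
    revert H; apply closure_sub; intros m [Hm1 Hm2]; apply subset_closure, incl_cons; auto.
  - revert k; apply closure_min; [apply (proj2_sig (fmeets ideal_gen (b :: l))) |].
    intros m Hm; simpl; split.
    + apply subset_closure, Hm; now left.
    + apply IH, subset_closure; intros x Hx; apply Hm; now right.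
Qed.

Lemma ideal_fjoin_fmeets (D : ideal_frame) :
  D = fjoin (fun y => exists l, proj1_sig D l /\ y = fmeets ideal_gen l).
Proof.
  apply ideal_ext; intros l0; simpl; split.
  - intros H; apply subset_closure; exists (fmeets ideal_gen l0); split; [eauto |].
    apply fmeets_ideal_gen, subset_closure, incl_refl.
  - apply closure_min; [apply (proj2_sig D) |]; intros m [y [[l [Hl ->]] Hy]].
    apply fmeets_ideal_gen in Hy; revert m Hy; apply closure_min; [apply (proj2_sig D) |].
    intros k Hk; apply (ideal_down (proj2_sig D)) with l; auto.
Qed.

Definition cov_valid {F : Frame} (g : G -> F) : Prop :=
  forall F0 Q, cov F0 Q -> fle (fmeets g F0) (fjoin (fun y => exists m, Q m /\ y = fmeets g m)).

Lemma ideal_gen_valid : cov_valid ideal_gen.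
Proof.
  intros F0 Q HQ l Hl; simpl; apply fmeets_ideal_gen in Hl; revert l Hl.
  apply closure_min; [apply closure_ideal |]; intros k Hk.
  apply closure_down with (k ++ F0); [apply incl_app; [apply incl_refl | exact Hk] |].
  apply closure_cov with Q; auto; intros m Hm; apply subset_closure.
  exists (fmeets ideal_gen m); split; [eauto |].
  apply fmeets_ideal_gen, subset_closure, incl_appr, incl_refl.
Qed.

Section Lift.
Variables (F : Frame) (g : G -> F) (g_valid : cov_valid g).

Definition ideal_lift_fun (D : ideal_frame) : F :=
  fjoin (fun y => exists l, proj1_sig D l /\ y = fmeets g l).

Lemma ideal_lift_closure U :
  fle (fjoin (fun y => exists l, closure U l /\ y = fmeets g l))
      (fjoin (fun y => exists l, U l /\ y = fmeets g l)).
Proof.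
  set (c := fjoin (fun y => exists l, U l /\ y = fmeets g l)).
  assert (Hc : is_ideal (fun l => fle (fmeets g l) c)).
  { split.
    - intros l l' H H'; eapply fle_trans; [apply fmeets_incl; eauto | auto].
    - intros F0 Q HQ l H; rewrite fmeets_app; eapply fle_trans.
      + apply fmeet_mono; [apply fle_refl | apply (g_valid HQ)].
      + apply fmeet_fjoin_le; intros s [m [Hm ->]]; rewrite <- fmeets_app; auto. }
  apply fjoin_lub; intros y [l [Hl ->]]; apply (closure_min (U := U) Hc); auto.
  intros m Hm; apply fjoin_ub; eauto.
Qed.

Lemma ideal_lift_top : ideal_lift_fun ftop = ftop.
Proof.
  apply fle_antisym; [apply ftop_max |].
  apply fle_fjoin with (fmeets g []); [exists []; simpl; auto | apply fle_refl].
Qed.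

Lemma ideal_lift_meet x y : ideal_lift_fun (fmeet x y) = fmeet (ideal_lift_fun x) (ideal_lift_fun y).
Proof.
  apply fle_antisym.
  - apply fmeet_glb; apply fjoin_lub; intros z [l [[Hx Hy] ->]];
      apply fle_fjoin with (fmeets g l); eauto using fle_refl.
  - apply fjoin_fmeet_le; intros s [l [Hl ->]]; apply fmeet_fjoin_le; intros s [l' [Hl' ->]].
    rewrite <- fmeets_app; apply fle_fjoin with (fmeets g (l ++ l')); [| apply fle_refl].
    exists (l ++ l'); split; [simpl; split | reflexivity].
    + apply (ideal_down (proj2_sig x)) with l; auto using incl_appl, incl_refl.
    + apply (ideal_down (proj2_sig y)) with l'; auto using incl_appr, incl_refl.
Qed.

Lemma ideal_lift_join S :
  ideal_lift_fun (fjoin S) = fjoin (fun y => exists x, S x /\ y = ideal_lift_fun x).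
Proof.
  apply fle_antisym.
  - eapply fle_trans; [apply ideal_lift_closure |].
    apply fjoin_lub; intros y [l [[x [Hx Hl]] ->]].
    apply fle_fjoin with (ideal_lift_fun x); [eauto |].
    apply fle_fjoin with (fmeets g l); [eauto | apply fle_refl].
  - apply fjoin_lub; intros y [x [Hx ->]]; apply fjoin_lub; intros y [l [Hl ->]].
    apply fle_fjoin with (fmeets g l); [| apply fle_refl].
    exists l; split; [apply subset_closure; exists x; auto | reflexivity].
Qed.

Definition ideal_lift : FrameHom ideal_frame F :=
  {| fh := ideal_lift_fun; fh_top := ideal_lift_top; fh_meet := ideal_lift_meet;
     fh_join := ideal_lift_join |}.

Lemma ideal_lift_gen b : ideal_lift (ideal_gen b) = g b.
Proof.
  apply fle_antisym.
  - eapply fle_trans; [apply ideal_lift_closure |].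
    apply fjoin_lub; intros y [l [Hl ->]]; apply fmeets_In; auto.
  - apply fle_fjoin with (fmeets g [b]).
    + exists [b]; split; [apply subset_closure; now left | reflexivity].
    + simpl; rewrite fmeet_top_r; apply fle_refl.
Qed.

End Lift.

Theorem ideal_frame_universal (F : Frame) (g : G -> F) : cov_valid g ->
  (exists h : FrameHom ideal_frame F, forall b, h (ideal_gen b) = g b) /\
  (forall h h' : FrameHom ideal_frame F, (forall b, h (ideal_gen b) = g b) ->
     (forall b, h' (ideal_gen b) = g b) -> fh_eq h h').
Proof.
  intros Hg; split; [exists (ideal_lift Hg); apply ideal_lift_gen |].
  intros h h' Hh Hh' D; rewrite (ideal_fjoin_fmeets D), !fh_join; apply fjoin_ext.
  intros y; split; intros [x [[l [Hl ->]] ->]]; exists (fmeets ideal_gen l); split; eauto;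
    now rewrite !fh_fmeets, (functional_extensionality _ _ Hh), (functional_extensionality _ _ Hh').
Qed.

End Coverage.

Lemma delta_refl A (a : A) : delta a a = true.
Proof. unfold delta; destruct excluded_middle_informative; congruence. Qed.

Lemma delta_neq A (a a' : A) : a' <> a -> delta a a' = false.
Proof. unfold delta; destruct excluded_middle_informative; congruence. Qed.

Lemma delta_true A (a a' : A) : delta a a' = true <-> a' = a.
Proof. unfold delta; destruct excluded_middle_informative; split; congruence. Qed.

Section MonadFacts.
Variable T : Monad.

Lemma seq_bind_r A B C (t : T A) (s : T B) (f : B -> T C) :
  seq_ t (bind s f) = bind (seq_ t s) f.
Proof. unfold seq_; now rewrite bind_assoc. Qed.

Lemma seq_bind_l A B C (t : T A) (u : A -> T B) (s : T C) :
  seq_ (bind t u) s = bind t (fun a => seq_ (u a) s).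
Proof. unfold seq_; now rewrite bind_assoc. Qed.

Lemma seq_assoc A B C (t : T A) (s : T B) (r : T C) :
  seq_ t (seq_ s r) = seq_ (seq_ t s) r.
Proof. unfold seq_; now rewrite bind_assoc. Qed.

Lemma seq_ret_l A B (a : A) (s : T B) : seq_ (ret a) s = s.
Proof. apply bind_ret_l. Qed.

Lemma maps_to_true (F : Frame) (g : T bool -> F) (s : T bool) : maps_to g s true = g s.
Proof.
  unfold maps_to; f_equal; rewrite <- (bind_ret_r _ _ s) at 2; f_equal.
  apply functional_extensionality; intros [|];
    [rewrite delta_refl | rewrite delta_neq by discriminate]; reflexivity.
Qed.

Lemma maps_to_ret (F : Frame) (g : T bool -> F) A (a a0 : A) :
  maps_to g (ret a) a0 = g (ret (delta a0 a)).
Proof. unfold maps_to; now rewrite bind_ret_l. Qed.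

Lemma LB0_relations_hom F G (h : FrameHom F G) (g : T bool -> F) :
  LB0_relations g -> LB0_relations (fun b => h (g b)).
Proof.
  intros [Hdisj [Htot Hbind]]; unfold LB0_relations, maps_to in *; split; [| split].
  - intros A t a a' Hne; now rewrite <- fh_meet, Hdisj, fh_bot.
  - intros A t a; rewrite Htot; apply fh_top.
  - intros A B t u b; rewrite Hbind, fh_join; apply fjoin_ext; intros y; split.
    + intros [x [[a ->] ->]]; exists a; now rewrite fh_meet.
    + intros [a ->]; eexists; split; [exists a; reflexivity | now rewrite fh_meet].
Qed.

End MonadFacts.

Section Behaviour.
Variable T : Monad.

Definition test A (t : T A) (a : A) : T bool := bind t (fun a' => ret (delta a a')).

(* [cover_bind] and [cover_bind_rev] are the two inequalities of the third
   defining relation. *)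
Inductive LB0_cover : list (T bool) -> (list (T bool) -> Prop) -> Prop :=
| cover_disjoint A (t : T A) (a a' : A) : a <> a' ->
    LB0_cover [test t a; test t a'] (fun _ => False)
| cover_total A (t : T A) (a : A) :
    LB0_cover [] (fun m => m = [test (seq_ t (ret a)) a])
| cover_bind A B (t : T A) (u : A -> T B) b :
    LB0_cover [test (bind t u) b] (fun m => exists a, m = [test t a; test (seq_ t (u a)) b])
| cover_bind_rev A B (t : T A) (u : A -> T B) b a :
    LB0_cover [test t a; test (seq_ t (u a)) b] (fun m => m = [test (bind t u) b]).

Lemma LB0_relations_cov_valid (F : Frame) (g : T bool -> F) :
  LB0_relations g <-> cov_valid LB0_cover g.
Proof.
  split.
  - intros [Hdisj [Htot Hbind]] F0 Q HQ; unfold maps_to in *.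
    destruct HQ as [A t a a' Hne | A t a | A B t u b | A B t u b a]; simpl;
      rewrite ?fmeet_top_r.
    + unfold test; rewrite Hdisj by auto; apply fbot_le.
    + apply fle_fjoin with (fmeets g [test (seq_ t (ret a)) a]); [eauto |].
      simpl; unfold test; rewrite Htot, fmeet_top_r; apply fle_refl.
    + unfold test at 1; rewrite Hbind; apply fjoin_lub; intros y [a ->].
      apply fle_fjoin with (fmeets g [test t a; test (seq_ t (u a)) b]); [eauto |].
      simpl; rewrite fmeet_top_r; apply fle_refl.
    + apply fle_fjoin with (fmeets g [test (bind t u) b]); [eauto |].
      simpl; rewrite fmeet_top_r; unfold test at 3; rewrite Hbind.
      apply fle_fjoin with (fmeet (g (test t a)) (g (test (seq_ t (u a)) b)));
        [exists a; reflexivity | apply fle_refl].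
  - intros Hg; split; [| split]; unfold maps_to.
    + intros A t a a' Hne; apply fle_fbot.
      assert (H := Hg _ _ (cover_disjoint t Hne)); simpl in H; rewrite fmeet_top_r in H.
      eapply fle_trans; [exact H |]; apply fjoin_lub; intros y [m [[] _]].
    + intros A t a; apply fle_antisym; [apply ftop_max |].
      eapply fle_trans; [exact (Hg _ _ (cover_total t a)) |].
      apply fjoin_lub; intros y [m [-> ->]]; simpl; rewrite fmeet_top_r; apply fle_refl.
    + intros A B t u b; apply fle_antisym.
      * assert (H := Hg _ _ (cover_bind t u b)); simpl in H; rewrite fmeet_top_r in H.
        eapply fle_trans; [exact H |]; apply fjoin_lub; intros y [m [[a ->] ->]]; simpl; rewrite fmeet_top_r.
        apply fle_fjoin with (fmeet (g (test t a)) (g (test (seq_ t (u a)) b)));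
          [exists a; reflexivity | apply fle_refl].
      * apply fjoin_lub; intros y [a ->].
        assert (H := Hg _ _ (cover_bind_rev t u b a)); simpl in H; rewrite fmeet_top_r in H.
        eapply fle_trans; [exact H |]; apply fjoin_lub; intros y [m [-> ->]]; simpl.
        rewrite fmeet_top_r; apply fle_refl.
Qed.

Theorem LB0_presented : presents_LB0 (ideal_gen LB0_cover).
Proof.
  split; [apply LB0_relations_cov_valid, ideal_gen_valid |].
  intros F g Hg; apply ideal_frame_universal, LB0_relations_cov_valid, Hg.
Qed.

End Behaviour.

Section Presented.
Variables (T : Monad) (L : Frame) (gen : T bool -> L) (P : presents_LB0 gen).

Lemma presented_relations : LB0_relations gen.
Proof. exact (proj1 P). Qed.

Lemma presented_hom_ext (F : Frame) (h h' : FrameHom L F) :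
  (forall b, h (gen b) = h' (gen b)) -> fh_eq h h'.
Proof.
  intros H; destruct (proj2 P F _ (LB0_relations_hom h presented_relations)) as [_ Hu].
  apply Hu; auto.
Qed.

Lemma presented_map_ext (W : Frame) (phi psi : L -> W) :
  (forall x y, phi (fmeet x y) = fmeet (phi x) (phi y)) ->
  (forall S, phi (fjoin S) = fjoin (fun y => exists x, S x /\ y = phi x)) ->
  (forall x y, psi (fmeet x y) = fmeet (psi x) (psi y)) ->
  (forall S, psi (fjoin S) = fjoin (fun y => exists x, S x /\ y = psi x)) ->
  phi ftop = psi ftop -> (forall b, phi (gen b) = psi (gen b)) -> forall x, phi x = psi x.
Proof.
  intros phi_meet phi_join psi_meet psi_join Htop Hgen x.
  set (h := @fdown_hom W _ L phi eq_refl phi_meet phi_join).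
  set (h' := @fdown_hom W _ L psi (eq_sym Htop) psi_meet psi_join).
  assert (E : fh_eq h h') by (apply presented_hom_ext; intros b; apply down_ext, Hgen).
  exact (f_equal (@proj1_sig _ _) (E x)).
Qed.

Lemma gen_top : gen (ret true) = ftop.
Proof.
  destruct presented_relations as [_ [Htot _]].
  now rewrite <- (Htot _ (ret true) true), seq_ret_l, maps_to_true.
Qed.

Lemma gen_bot : gen (ret false) = fbot L.
Proof.
  destruct presented_relations as [Hdisj _].
  rewrite <- (Hdisj _ (ret true) true false) by discriminate.
  now rewrite !maps_to_ret, delta_refl, delta_neq, gen_top, fmeet_top_l by discriminate.
Qed.

Lemma copow_hom_ext A (W : Frame) (m m' : FrameHom (copow A L) W) :
  (forall a t0, m (pt a (gen t0)) = m' (pt a (gen t0))) -> fh_eq m m'.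
Proof.
  intros H.
  assert (Hpt : forall a x, m (pt a x) = m' (pt a x)).
  { intros a; apply presented_map_ext; auto.
    1,3: intros; rewrite pt_meet; apply fh_meet.
    1,2: intros S; rewrite pt_join, fh_join; apply fjoin_ext; intros y; split;
      [intros [g [[x [Hx ->]] ->]] | intros [x [Hx ->]]]; eauto.
    rewrite <- gen_top; auto. }
  intros f; rewrite (copow_fjoin_pt f), !fh_join; apply fjoin_ext; intros y; split;
    intros [g [[a ->] ->]]; eexists; split; eauto.
Qed.

Lemma seq_relations {A} (t : T A) : LB0_relations (fun b => gen (seq_ t b)).
Proof.
  destruct presented_relations as [Hdisj [Htot Hbind]]; unfold LB0_relations, maps_to in *.
  split; [| split].
  - intros B s b b' Hne; rewrite !seq_bind_r; auto.
  - intros B s b; rewrite seq_bind_r, seq_assoc; apply Htot.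
  - intros B C s u c; rewrite !seq_bind_r, Hbind; apply fjoin_ext; intros y; split;
      intros [b ->]; exists b; now rewrite ?seq_bind_r, ?seq_assoc.
Qed.

Definition seq_hom {A} (t : T A) : FrameHom L L :=
  proj1_sig (constructive_indefinite_description _ (proj1 (proj2 P L _ (seq_relations t)))).

Lemma seq_hom_gen {A} (t : T A) b : seq_hom t (gen b) = gen (seq_ t b).
Proof.
  exact (proj2_sig (constructive_indefinite_description _
                      (proj1 (proj2 P L _ (seq_relations t)))) b).
Qed.

Lemma gen_seq_top {A} (t : T A) : gen (seq_ t (ret true)) = ftop.
Proof. now rewrite <- seq_hom_gen, gen_top, fh_top. Qed.

Lemma maps_to_cover {A} (t : T A) : fjoin (fun y => exists a, y = maps_to gen t a) = ftop.
Proof.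
  destruct presented_relations as [_ [_ Hbind]].
  rewrite <- (gen_seq_top t), <- maps_to_true; unfold seq_; rewrite Hbind.
  apply fjoin_ext; intros y; split; intros [a ->]; exists a;
    now rewrite ?maps_to_true, ?gen_seq_top, ?fmeet_top_r.
Qed.

Lemma maps_to_disjoint {A} (t : T A) a a' :
  a <> a' -> fmeet (maps_to gen t a) (maps_to gen t a') = fbot L.
Proof. apply presented_relations. Qed.

Definition sem_fun {A} (t : T A) (f : copow A L) : L :=
  fjoin (fun y => exists a, y = fmeet (maps_to gen t a) (seq_hom t (f a))).

Lemma sem_fun_top {A} (t : T A) : sem_fun t ftop = ftop.
Proof.
  rewrite <- (maps_to_cover t); apply fjoin_ext; intros y; split; intros [a ->]; exists a;
    simpl; now rewrite ?fh_top, ?fmeet_top_r.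
Qed.

Lemma sem_fun_meet {A} (t : T A) (f g : copow A L) :
  sem_fun t (fmeet f g) = fmeet (sem_fun t f) (sem_fun t g).
Proof.
  unfold sem_fun; rewrite fmeet_fjoin_disjoint by apply maps_to_disjoint.
  apply fjoin_ext; intros y; split; intros [a ->]; exists a; simpl; now rewrite ?fh_meet.
Qed.

Lemma sem_fun_join {A} (t : T A) (S : copow A L -> Prop) :
  sem_fun t (fjoin S) = fjoin (fun y => exists f, S f /\ y = sem_fun t f).
Proof.
  apply fle_antisym.
  - apply fjoin_lub; intros y [a ->]; simpl; rewrite fh_join.
    apply fmeet_fjoin_le; intros s [x [[f [Hf ->]] ->]].
    apply fle_fjoin with (sem_fun t f); [eauto |]; apply fjoin_ub; eauto.
  - apply fjoin_lub; intros y [f [Hf ->]]; apply fjoin_lub; intros y [a ->].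
    eapply fle_fjoin; [exists a; reflexivity |].
    apply fmeet_mono; [apply fle_refl | apply fh_mono; simpl; apply fjoin_ub; eauto].
Qed.

Definition LB0_sem : ComodelStr T L := fun A t =>
  {| fh := sem_fun t; fh_top := sem_fun_top t; fh_meet := sem_fun_meet t;
     fh_join := sem_fun_join t |}.

Lemma LB0_sem_pt {A} (t : T A) a0 t0 :
  LB0_sem A t (pt a0 (gen t0)) = fmeet (maps_to gen t a0) (gen (seq_ t t0)).
Proof.
  apply fle_antisym.
  - apply fjoin_lub; intros y [a ->]; destruct (classic (a = a0)) as [-> | Hne].
    + rewrite pt_eq, seq_hom_gen; apply fle_refl.
    + rewrite pt_neq, fh_bot, fmeet_bot_r by auto; apply fbot_le.
  - apply fjoin_ub; exists a0; now rewrite pt_eq, seq_hom_gen.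
Qed.

Lemma LB0_sem_unique {A} (t : T A) (m : LocMap L (copow A L)) :
  (forall a0 t0, m (pt a0 (gen t0)) = fmeet (maps_to gen t a0) (gen (seq_ t t0))) ->
  loc_eq m (LB0_sem A t).
Proof. intros Hm; apply copow_hom_ext; intros; now rewrite Hm, LB0_sem_pt. Qed.

Lemma LB0_sem_ret A (a : A) : loc_eq (LB0_sem A (ret a)) (upsilon L a).
Proof.
  apply copow_hom_ext; intros a0 t0.
  change (LB0_sem A (ret a) (pt a0 (gen t0)) = pt a0 (gen t0) a).
  rewrite LB0_sem_pt, maps_to_ret, seq_ret_l; destruct (classic (a = a0)) as [-> | Hne].
  - now rewrite delta_refl, gen_top, fmeet_top_l, pt_eq.
  - now rewrite delta_neq, gen_bot, fmeet_bot_l, pt_neq by auto.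
Qed.

Lemma LB0_sem_bind A B (t : T A) (u : A -> T B) :
  loc_eq (LB0_sem B (bind t u)) (loc_comp (copair (fun a => LB0_sem B (u a))) (LB0_sem A t)).
Proof.
  apply copow_hom_ext; intros b0 t0.
  change (LB0_sem B (bind t u) (pt b0 (gen t0)) =
          LB0_sem A t (fun a => LB0_sem B (u a) (pt b0 (gen t0)))).
  destruct presented_relations as [_ [_ Hbind]].
  rewrite LB0_sem_pt, <- (@maps_to_true T L gen (seq_ (bind t u) t0)), seq_bind_l, !Hbind.
  rewrite fmeet_fjoin_disjoint by apply maps_to_disjoint.
  apply fjoin_ext; intros y; split; intros [a ->]; exists a;
    rewrite LB0_sem_pt, maps_to_true, fh_meet; unfold maps_to;
    now rewrite !seq_hom_gen, ?seq_bind_r.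
Qed.

Lemma LB0_sem_comodel : is_comodel LB0_sem.
Proof. split; [apply LB0_sem_ret | apply LB0_sem_bind]. Qed.

Lemma gen_LB0_sem (b : T bool) : LB0_sem bool b (pt true ftop) = gen b.
Proof. now rewrite <- gen_top, LB0_sem_pt, maps_to_true, gen_seq_top, fmeet_top_r. Qed.

Section Terminal.
Variables (W : Frame) (semW : ComodelStr T W) (HW : is_comodel semW).

Lemma comodel_ret A (a : A) (f : copow A W) : semW A (ret a) f = f a.
Proof. exact (proj1 HW A a f). Qed.

Lemma comodel_bind A B (t : T A) (u : A -> T B) (f : copow B W) :
  semW B (bind t u) f = semW A t (fun a => semW B (u a) f).
Proof. exact (proj2 HW A B t u f). Qed.

Definition comodel_gen (b : T bool) : W := semW bool b (pt true ftop).

Lemma comodel_maps_to A (t : T A) a : maps_to comodel_gen t a = semW A t (pt a ftop).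
Proof.
  unfold maps_to, comodel_gen; rewrite comodel_bind; f_equal.
  apply copow_ext; intros a'; rewrite comodel_ret.
  apply fjoin_ext; intros x; rewrite delta_true; tauto.
Qed.

Lemma comodel_seq A (t : T A) (b : T bool) : comodel_gen (seq_ t b) = semW A t (fun _ => comodel_gen b).
Proof. apply comodel_bind. Qed.

Lemma comodel_gen_relations : LB0_relations comodel_gen.
Proof.
  split; [| split].
  - intros A t a a' Hne; now rewrite !comodel_maps_to, <- fh_meet, pt_disjoint, fh_bot.
  - intros A t a; rewrite comodel_maps_to; unfold seq_; rewrite comodel_bind.
    rewrite comodel_ret, pt_eq; apply (fh_top (semW A t)).
  - intros A B t u b.
    rewrite comodel_maps_to, comodel_bind, (copow_fjoin_pt (fun a => semW B (u a) (pt b ftop))).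
    rewrite fh_join; apply fjoin_ext; intros y; split.
    + intros [x [[a ->] ->]]; exists a.
      rewrite !comodel_maps_to; unfold seq_; now rewrite comodel_bind, <- fh_meet, pt_top_meet.
    + intros [a ->]; eexists; split; [exists a; reflexivity |].
      rewrite !comodel_maps_to; unfold seq_; now rewrite comodel_bind, <- fh_meet, pt_top_meet.
Qed.

Lemma comodel_map_of_gen (h : FrameHom L W) :
  (forall b, h (gen b) = comodel_gen b) -> is_comodel_map semW LB0_sem h.
Proof.
  intros Hh A t; apply copow_hom_ext; intros a0 t0.
  change (h (LB0_sem A t (pt a0 (gen t0))) = semW A t (fun a => h (pt a0 (gen t0) a))).
  rewrite LB0_sem_pt, fh_meet; unfold maps_to; rewrite !Hh; fold (maps_to comodel_gen t a0).
  rewrite comodel_maps_to, comodel_seq, <- fh_meet, pt_top_meet; f_equal.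
  apply copow_ext; intros a; now rewrite fh_pt, Hh.
Qed.

Lemma comodel_map_gen (h : FrameHom L W) :
  is_comodel_map semW LB0_sem h -> forall b, h (gen b) = comodel_gen b.
Proof.
  intros Hh b; rewrite <- gen_LB0_sem.
  change ((loc_comp (LB0_sem bool b) h) (pt true ftop) = comodel_gen b).
  rewrite (Hh bool b (pt true ftop)); unfold comodel_gen; simpl; f_equal.
  apply copow_ext; intros a; now rewrite fh_pt, fh_top.
Qed.

End Terminal.

Theorem LB0_sem_terminal : terminal_comodel LB0_sem.
Proof.
  intros W semW HW; split.
  - destruct (proj1 (proj2 P W _ (comodel_gen_relations HW))) as [h Hh].
    exists h; apply comodel_map_of_gen; auto.
  - intros h h' Hh Hh'; apply presented_hom_ext; intros b.
    now rewrite (comodel_map_gen Hh), (comodel_map_gen Hh').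
Qed.

End Presented.

Theorem proposition3p3 (T : Monad) (HT : ranked T) :
  (exists (L : Frame) (gen : T bool -> L), presents_LB0 gen) /\
  forall (L : Frame) (gen : T bool -> L), presents_LB0 gen ->
    exists sem : ComodelStr T L,
      (forall (A : Type) (t : T A) (a0 : A) (t0 : T bool),
          loc_inv (sem A t) (pt a0 (gen t0)) =
          fmeet (maps_to gen t a0) (gen (seq_ t t0))) /\
      (forall (A : Type) (t : T A) (m : LocMap L (copow A L)),
          (forall (a0 : A) (t0 : T bool),
              loc_inv m (pt a0 (gen t0)) =
              fmeet (maps_to gen t a0) (gen (seq_ t t0))) ->
          loc_eq m (sem A t)) /\
      is_comodel sem /\
      terminal_comodel sem.
Proof.
  (* Rankedness keeps LB_0 T small in the paper; here the frame of ideals is built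
     with impredicative Prop. *)
  split; [exists (ideal_frame (LB0_cover T)), (ideal_gen (LB0_cover T)); apply LB0_presented |].
  intros L gen P; exists (LB0_sem P); split; [| split; [| split]].
  - apply LB0_sem_pt.
  - apply LB0_sem_unique.
  - apply LB0_sem_comodel.
  - apply LB0_sem_terminal.
Qed.
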